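(* Let $n\ge3$, $\zeta=2\pi/n$, $m\in\mathbb{Z}$, $a>0$, $V$ smooth. For $k\in\{1,\dots,n\}$ and $z\in\mathbb{C}^2$ let $T_kz=n^{-1/2}\big(e^{(ikI+mJ)\zeta}z,e^{2(ikI+mJ)\zeta}z,\dots,e^{n(ikI+mJ)\zeta}z\big)\in\mathbb{C}^{2n}$. Let $\alpha_k=4\cos(m\zeta)\sin^2(k\zeta/2)$ and $\beta_k=2\sin(m\zeta)\sin(k\zeta)$. Then the Hessian satisfies $D^2H(\mathbf{a}_m)T_kz=T_kB_kz$, where $B_k$ is the $2\times2$ matrix $B_k=\mathrm{diag}(2a^2V''(a^2)-\alpha_k,-\alpha_k)+iJ\beta_k$.
   Context: $J=\begin{pmatrix}0&-1\\1&0\end{pmatrix}$, $I$ the $2\times2$ identity. $\omega=4\sin^2(m\zeta/2)-V'(a^2)$ and $H(u)=\frac12\sum_{j=1}^n\{V(|u_j|^2)+\omega|u_j|^2-|u_{j+1}-u_j|^2\}$ for $u=(u_1,\dots,u_n)\in(\mathbb{R}^2)^n$, indices mod $n$ (the Hamiltonian of the DNLS lattice $i\dot q_j=V'(|q_j|^2)q_j+(q_{j+1}-q_j)+(q_{j-1}-q_j)$ in rotating coordinates $q_j=e^{i\omega t}u_j$). $\mathbf{a}_m=(a_1,\dots,a_n)$ with $a_j=ae^{jm\zeta J}e_1$. The real $2n\times2n$ matrix $D^2H(\mathbf{a}_m)$ acts complex-linearly on $\mathbb{C}^{2n}$. *)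

From HB Require Import structures.
From mathcomp Require Import all_boot all_order all_algebra.
From mathcomp Require Import all_classical all_reals.
From mathcomp Require Import topology normedtype derive trigo.
From mathcomp Require Import complex.
Unset Printing Implicit Defensive.
Import Order.TTheory GRing.Theory Num.Theory.
Import numFieldNormedType.Exports.
Local Open Scope ring_scope.
Local Open Scope complex_scope.

Section DNLS.
Context {R : realType}.

Definition smooth (V : R -> R) : Prop :=
  forall (k : nat) (x : R), derivable (derive1n k V) x 1.

Definition zeta (n : nat) : R := 2 * pi / n%:R.

Definition omega (V : R -> R) (n : nat) (m : int) (a : R) : R :=
  4 * (sin (m%:~R * zeta n / 2)) ^+ 2 - (derive1 V) (a ^+ 2).

(* A point u = (u_1,...,u_n) of (R^2)^n is stored as an n x 2 real matrix:
   row j (j : 'I_n, 0-based) is u_{j+1}; indices mod n via ordS. *)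
Definition sqn2 (v : 'rV[R]_2) : R := \sum_(c < 2) v 0 c ^+ 2.

Definition H (V : R -> R) (n : nat) (m : int) (a : R) (u : 'M[R]_(n, 2)) : R :=
  2^-1 * \sum_(j < n)
    (V (sqn2 (row j u)) + omega V n m a * sqn2 (row j u)
      - sqn2 (row (ordS j) u - row j u)).

(* rotation e^{theta J}, J = [[0,-1],[1,0]] *)
Definition rot (theta : R) : 'M[R]_2 :=
  \matrix_(i < 2, j < 2)
    (if (i == 0) && (j == 0) then cos theta
     else if (i == 0) then - sin theta
     else if (j == 0) then sin theta else cos theta).

Definition Jmx : 'M[R]_2 :=
  \matrix_(i < 2, j < 2)
    (if (i == 0) && (j == 0) then 0
     else if (i == 0) then -1
     else if (j == 0) then 1 else 0).

(* the relative equilibrium a_m, with a_j = a e^{j m zeta J} e_1, row j <-> a_{j+1} *)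
Definition am (n : nat) (m : int) (a : R) : 'M[R]_(n, 2) :=
  \matrix_(j < n, c < 2) (a *: rot ((j.+1)%:R * m%:~R * zeta n)) c 0.

(* Hessian of f : (R^2)^n -> R at u, as second partial derivatives; the
   coordinate index (j, c) is coordinate c of u_{j+1}. *)
Definition hess (n : nat) (f : 'M[R]_(n, 2) -> R) (u : 'M[R]_(n, 2))
  (p q : 'I_n * 'I_2) : R :=
  'D_(delta_mx p.1 p.2) ('D_(delta_mx q.1 q.2) f) u.

(* complex-linear action of the real 2n x 2n Hessian on C^{2n} = 'M[C]_(n,2) *)
Definition hess_act (n : nat) (f : 'M[R]_(n, 2) -> R) (u : 'M[R]_(n, 2))
  (w : 'M[R[i]]_(n, 2)) : 'M[R[i]]_(n, 2) :=
  \matrix_(j < n, c < 2)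
    \sum_(l < n) \sum_(d < 2) (hess n f u (j, c) (l, d))%:C * w l d.

Definition expi (theta : R) : R[i] := (cos theta +i* sin theta)%C.

Definition mxC (M : 'M[R]_2) : 'M[R[i]]_2 := map_mx (fun r => r%:C%C) M.

(* T_k z: block j+1 equals n^{-1/2} e^{(j+1)(ikI + mJ)zeta} z
   = n^{-1/2} e^{i (j+1) k zeta} e^{(j+1) m zeta J} z *)
Definition Tk (n : nat) (m : int) (k : nat) (z : 'cV[R[i]]_2) : 'M[R[i]]_(n, 2) :=
  \matrix_(j < n, c < 2)
    ((Num.sqrt (n%:R : R))^-1%:C%C * expi ((j.+1)%:R * k%:R * zeta n)
      * (mxC (rot ((j.+1)%:R * m%:~R * zeta n)) *m z) c 0).

Definition alpha (n : nat) (m : int) (k : nat) : R :=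
  4 * cos (m%:~R * zeta n) * (sin (k%:R * zeta n / 2)) ^+ 2.

Definition beta (n : nat) (m : int) (k : nat) : R :=
  2 * sin (m%:~R * zeta n) * sin (k%:R * zeta n).

Definition Bk (V : R -> R) (n : nat) (m : int) (a : R) (k : nat) : 'M[R[i]]_2 :=
  mxC (\matrix_(i < 2, j < 2)
         (if i == j then
            (if i == 0 then 2 * a ^+ 2 * (derive1n 2 V) (a ^+ 2) - alpha n m k
             else - alpha n m k)
          else 0))
  + ('i%C * (beta n m k)%:C%C) *: mxC Jmx.

End DNLS.

From Pilot Require Import Defs.
From HB Require Import structures.
From mathcomp Require Import all_boot all_order all_algebra.
From mathcomp Require Import all_classical all_reals.
From mathcomp Require Import topology normedtype derive trigo.
From mathcomp Require Import complex ring.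
Import Order.TTheory GRing.Theory Num.Theory.
Import numFieldNormedType.Exports.
Local Open Scope ring_scope.
Local Open Scope complex_scope.

(* At the relative equilibrium the Hessian acts blockwise by
     (D^2 H(a_m) W)_j = 2 a^2 V''(a^2) (R_j e_1) <R_j e_1, W_j>
                        - 2 cos(m zeta) W_j + W_(j+1) + W_(j-1),
   with R_j = e^(j m zeta J), because V'(a^2) + omega - 2 = -2 cos(m zeta).
   For the Bloch wave T_k z, whose j-th block is n^(-1/2) e^(i j k zeta) R_j z,
   the neighbouring blocks are the j-th one with z replaced by
   e^(+-i k zeta) R_(+-m zeta) z (the indices wrap around since n zeta = 2 pi),
   and <R_j e_1, R_j z> = z_1.  Hence every block of the image is
   n^(-1/2) e^(i j k zeta) R_j applied to one and the same vector, which is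
   B_k z. *)

Section DirectionalDerivative.
Context {R : realType} {V W : normedModType R}.

Lemma derive_lineE (f : V -> W) x v :
  'D_v f x = 'D_1 (fun h : R => f (h *: v + x)) 0.
Proof.
rewrite /derive; set g1 := fun h => h^-1 *: _; set g2 := fun h => h^-1 *: _.
suff -> : g1 = g2 by [].
by rewrite funeqE /g1 /g2 => h /=; rewrite addr0 scale0r add0r [_%:A]mulr1.
Qed.

Lemma is_derive_lineP (f : V -> W) x v df :
  is_derive x v f df <-> is_derive (0 : R) 1 (fun h : R => f (h *: v + x)) df.
Proof.
split=> -[f_derivable f_derive]; split.
- by move/derivable1P: f_derivable.
- by rewrite -derive_lineE.
- by apply/derivable1P.
- by rewrite derive_lineE.
Qed.

Lemma is_derive_sum_fun n (h : 'I_n -> V -> W) x v dh :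
  (forall i, is_derive x v (h i) (dh i)) ->
  is_derive x v (fun y => \sum_(i < n) h i y) (\sum_(i < n) dh i).
Proof.
move=> h_derive; have := is_derive_sum h_derive.
by congr is_derive; apply: funext => y; rewrite fct_sumE.
Qed.

End DirectionalDerivative.

Section RealValued.
Context {R : realType} {V : normedModType R}.

Lemma is_deriveM_fun (f g : V -> R) x v df dg :
  is_derive x v f df -> is_derive x v g dg ->
  is_derive x v (fun y => f y * g y) (f x * dg + g x * df).
Proof. exact: is_deriveM. Qed.

Lemma is_deriveX_fun (f : V -> R) k x v df : is_derive x v f df ->
  is_derive x v (fun y => f y ^+ k) (k%:R * f x ^+ k.-1 * df).
Proof.
move=> f_derive; have := is_deriveX k f_derive.
by congr is_derive; apply: funext => y; rewrite exprfctE.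
Qed.

Lemma is_derive_comp_real (F : R -> R) (g : V -> R) u v dg :
  is_derive u v g dg -> derivable F (g u) 1 ->
  is_derive u v (fun y => F (g y)) (derive1 F (g u) * dg).
Proof.
move=> /is_derive_lineP [g_derivable g_derive] F_derivable; apply/is_derive_lineP.
set gl := fun h : R => g (h *: v + u).
have gl0 : gl 0 = g u by rewrite /gl scale0r add0r.
split.
- apply/derivable1_diffP; apply: (@differentiable_comp _ _ _ _ gl F).
  + exact/derivable1_diffP.
  + by rewrite gl0; apply/derivable1_diffP.
- rewrite -derive1E (_ : (fun h => F (gl h)) = F \o gl) // derive1_comp.
  + by rewrite !derive1E gl0 g_derive.
  + exact: g_derivable.
  + by rewrite gl0.
Qed.

Lemma is_derive_mx_entry m k (u v : 'M[R]_(m, k)) j c :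
  is_derive u v (fun N : 'M[R]_(m, k) => N j c) (v j c).
Proof.
apply/is_derive_lineP.
rewrite (_ : (fun h : R => _) = fun h => h * v j c + u j c); last first.
  by apply: funext => h; rewrite !mxE.
by apply: is_derive_eq; rewrite scaler0 add0r addr0 [_%:A]mulr1.
Qed.

End RealValued.

Section DeltaSums.
Context {K : comPzRingType}.

Lemma sum_mulr_delta_mx p q (j0 : 'I_p) (c0 : 'I_q) j (f : 'I_q -> K) :
  \sum_(c < q) f c * (delta_mx j0 c0 : 'M[K]_(p, q)) j c = (j == j0)%:R * f c0.
Proof.
rewrite (bigD1 c0) //= big1 ?addr0 => [|c c_neq]; rewrite mxE.
  by rewrite eqxx andbT mulrC.
by rewrite (negbTE c_neq) andbF mulr0.
Qed.

Lemma sum_eq_natr_mul (I : finType) (i0 : I) (F : I -> K) :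
  \sum_i (i == i0)%:R * F i = F i0.
Proof.
rewrite (bigD1 i0) //= eqxx mul1r big1 ?addr0 // => i i_neq.
by rewrite (negbTE i_neq) mul0r.
Qed.

Lemma sum_ordS_natr_mul n (j0 : 'I_n) (F : 'I_n -> K) :
  \sum_(j < n) (ordS j == j0)%:R * F j = F (ord_pred j0).
Proof.
rewrite (bigD1 (ord_pred j0)) //= ord_predK eqxx mul1r big1 ?addr0 // => j j_neq.
case: eqP => [ordSj|_]; last by rewrite mul0r.
by move: j_neq; rewrite -ordSj ordSK eqxx.
Qed.

End DeltaSums.

Section ComplexifiedDeltaSums.
Context {R : realType}.

Lemma sum_delta_mxC p q (x : R) i e (W : 'M[R[i]]_(p, q)) :
  \sum_(l < p) \sum_(d < q) (x * (delta_mx l d : 'M[R]_(p, q)) i e)%:C * W l d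
  = x%:C * W i e.
Proof.
rewrite (bigD1 i) //= [X in _ + X]big1 ?addr0 => [|l l_neq]; last first.
  by apply: big1 => d _; rewrite mxE eq_sym (negbTE l_neq) mulr0 mul0r.
rewrite (bigD1 e) //= [X in _ + X]big1 ?addr0 => [|d d_neq]; last first.
  by rewrite mxE eqxx eq_sym (negbTE d_neq) mulr0 mul0r.
by rewrite mxE !eqxx mulr1.
Qed.

Lemma sum_delta_mx_combC p q (s : seq (R * ('I_p * 'I_q))) (W : 'M[R[i]]_(p, q)) :
  \sum_(l < p) \sum_(d < q)
     (\sum_(t <- s) t.1 * (delta_mx l d : 'M[R]_(p, q)) t.2.1 t.2.2)%:C * W l d
  = \sum_(t <- s) t.1%:C * W t.2.1 t.2.2.
Proof.
elim: s => [|t s IH].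
  by rewrite big_nil; apply: big1 => l _; apply: big1 => d _; rewrite big_nil mul0r.
rewrite big_cons -IH -sum_delta_mxC -big_split; apply: eq_bigr => l _ /=.
by rewrite -big_split; apply: eq_bigr => d _; rewrite big_cons rmorphD mulrDl.
Qed.

End ComplexifiedDeltaSums.

Lemma sum_ord2 (T : nmodType) (F : 'I_2 -> T) : \sum_(c < 2) F c = F 0 + F 1.
Proof. by rewrite big_ord_recl big_ord1; congr (_ + F _); exact: val_inj. Qed.

Section HamiltonianDerivatives.
Context {R : realType}.
Variables (n : nat) (m : int) (a : R) (V : R -> R).
Local Notation M := 'M[R]_(n, 2).
Local Notation om := (omega V n m a).

Definition row_norm2 (j : 'I_n) (u : M) : R := \sum_(c < 2) u j c ^+ 2.

Definition dH (v u : M) : R :=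
  \sum_(j < n) ((derive1 V (row_norm2 j u) + om) * (\sum_(c < 2) u j c * v j c)
     - \sum_(c < 2) (u (ordS j) c - u j c) * (v (ordS j) c - v j c)).

Definition d2H (w v u : M) : R :=
  \sum_(j < n) (derive1 (derive1 V) (row_norm2 j u)
        * (\sum_(c < 2) 2 * u j c * w j c) * (\sum_(c < 2) u j c * v j c)
     + (derive1 V (row_norm2 j u) + om) * (\sum_(c < 2) v j c * w j c)
     - \sum_(c < 2) (v (ordS j) c - v j c) * (w (ordS j) c - w j c)).

Lemma HE : H V n m a = fun u : M => 2^-1 * \sum_(j < n)
   (V (row_norm2 j u) + om * row_norm2 j u
    - \sum_(c < 2) (u (ordS j) c - u j c) ^+ 2).
Proof.
apply: funext => u; congr (_ * _); apply: eq_bigr => j _.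
by rewrite /sqn2 /row_norm2; congr (V _ + _ * _ - _); apply: eq_bigr => c _;
  rewrite !mxE.
Qed.

Lemma is_derive_row_norm2 (u v : M) j :
  is_derive u v (row_norm2 j) (\sum_(c < 2) 2 * u j c * v j c).
Proof.
apply: is_derive_sum_fun => c.
by apply: is_derive_eq; [apply/is_deriveX_fun/is_derive_mx_entry | rewrite expr1].
Qed.

Lemma is_derive_H (V_derivable : forall x, derivable V x 1) (u v : M) :
  is_derive u v (H V n m a) (dH v u).
Proof.
rewrite HE; apply: is_derive_eq.
  apply: is_deriveM_fun; apply: is_derive_sum_fun => j; apply: is_deriveB.
    apply: is_deriveD.
      exact: is_derive_comp_real (is_derive_row_norm2 _ _ _) (V_derivable _).
    by apply: is_deriveM_fun; apply: is_derive_row_norm2.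
  by apply: is_derive_sum_fun => c; apply/is_deriveX_fun/is_deriveB;
    apply: is_derive_mx_entry.
rewrite /= mulr0 addr0 /dH mulr_sumr; apply: eq_bigr => j _; rewrite mulr0 addr0.
under eq_bigr do rewrite -mulrA.
under [X in _ - X]eq_bigr do rewrite expr1 -mulrA.
by rewrite -!mulr_sumr; field.
Qed.

Lemma is_derive_dH (V'_derivable : forall x, derivable (derive1 V) x 1)
    (u v w : M) :
  is_derive u w (dH v) (d2H w v u).
Proof.
apply: is_derive_eq.
  apply: is_derive_sum_fun => j; apply: is_deriveB.
    apply: is_deriveM_fun.
      apply: is_deriveD (is_derive_cst om _ _).
      exact: is_derive_comp_real (is_derive_row_norm2 _ _ _) (V'_derivable _).
    apply: is_derive_sum_fun => c.
    by apply: is_deriveM_fun; apply: is_derive_mx_entry.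
  by apply: is_derive_sum_fun => c; apply: is_deriveM_fun; apply: is_deriveB;
    apply: is_derive_mx_entry.
apply: eq_bigr => j _ /=.
under eq_bigr do rewrite mulr0 add0r.
under [X in _ - X]eq_bigr do rewrite mulr0 add0r.
by rewrite addr0; ring.
Qed.

Lemma hessE (V_derivable : forall x, derivable V x 1)
    (V'_derivable : forall x, derivable (derive1 V) x 1) (u : M) p q :
  hess n (H V n m a) u p q = d2H (delta_mx p.1 p.2) (delta_mx q.1 q.2) u.
Proof.
rewrite /hess (_ : 'D_(delta_mx q.1 q.2) (H V n m a) = dH (delta_mx q.1 q.2)).
  exact: @derive_val _ _ _ _ _ _ _ (is_derive_dH V'_derivable _ _ _).
by apply: funext => x; apply: @derive_val _ _ _ _ _ _ _ (is_derive_H V_derivable _ _).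
Qed.

Lemma d2H_delta_mx j0 c0 (v u : M) :
  d2H (delta_mx j0 c0) v u =
    derive1 (derive1 V) (row_norm2 j0 u) * (2 * u j0 c0)
      * (\sum_(c < 2) u j0 c * v j0 c)
    + (derive1 V (row_norm2 j0 u) + om - 2) * v j0 c0
    + v (ordS j0) c0 + v (ord_pred j0) c0.
Proof.
have diff_sum j : \sum_(c < 2) (v (ordS j) c - v j c)
      * ((delta_mx j0 c0 : M) (ordS j) c - (delta_mx j0 c0 : M) j c) =
    (ordS j == j0)%:R * (v (ordS j) c0 - v j c0)
      - (j == j0)%:R * (v (ordS j) c0 - v j c0).
  pose f c := v (ordS j) c - v j c.
  rewrite -(sum_mulr_delta_mx _ _ j0 c0 (ordS j) f).
  rewrite -(sum_mulr_delta_mx _ _ j0 c0 j f) -sumrB.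
  by apply: eq_bigr => c _; rewrite mulrBr.
rewrite /d2H; under eq_bigr => j _ do rewrite !sum_mulr_delta_mx diff_sum.
rewrite (eq_bigr (fun j => (j == j0)%:R * (derive1 (derive1 V) (row_norm2 j u)
      * (2 * u j c0) * (\sum_(c < 2) u j c * v j c)
      + (derive1 V (row_norm2 j u) + om) * v j c0 + (v (ordS j) c0 - v j c0))
    + (ordS j == j0)%:R * (v j c0 - v (ordS j) c0))); last by move=> j _; ring.
by rewrite big_split /= sum_eq_natr_mul sum_ordS_natr_mul ord_predK; ring.
Qed.

Lemma hess_act_H (V_derivable : forall x, derivable V x 1)
    (V'_derivable : forall x, derivable (derive1 V) x 1) (u : M)
    (W : 'M[R[i]]_(n, 2)) j c :
  hess_act n (H V n m a) u W j c =
    \sum_(d < 2) (derive1 (derive1 V) (row_norm2 j u) * (2 * u j c) * u j d)%:C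
      * W j d
    + (derive1 V (row_norm2 j u) + om - 2)%:C * W j c
    + W (ordS j) c + W (ord_pred j) c.
Proof.
(* Row (j, c) of the Hessian is the linear combination [s] of coordinates. *)
set A := derive1 (derive1 V) (row_norm2 j u) * (2 * u j c).
pose s := [:: (A * u j 0, (j, 0)); (A * u j 1, (j, 1));
  (derive1 V (row_norm2 j u) + om - 2, (j, c)); (1, (ordS j, c));
  (1, (ord_pred j, c))].
rewrite /hess_act mxE (eq_bigr (fun l => \sum_(d < 2)
    ((\sum_(t <- s) t.1 * (delta_mx l d : M) t.2.1 t.2.2)%:C * W l d))).
  by rewrite sum_delta_mx_combC !big_cons big_nil sum_ord2 addr0 !rmorph1 !mul1r
    !addrA.
move=> l _; apply: eq_bigr => d _; congr (_%:C * _).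
by rewrite hessE //= d2H_delta_mx !big_cons big_nil sum_ord2 /= /A; ring.
Qed.

End HamiltonianDerivatives.
Arguments row_norm2 {R n}.

Section Trigonometry.
Context {R : realType}.

Lemma sin_half2 (x : R) : sin (x / 2) ^+ 2 = (1 - cos x) / 2.
Proof.
have -> : cos x = cos (x / 2 + x / 2) by congr cos; field.
by rewrite cosD -!expr2 cos2sin2; field.
Qed.

Lemma periodic_intr {f : R -> R} : periodic f (pi *+ 2) ->
  forall x (t : int), f (x + t%:~R * (pi *+ 2)) = f x.
Proof.
move=> f_periodic x [p|p]; first by rewrite mulr_natl (periodicn f_periodic).
rewrite NegzE mulNr mulr_natl.
by rewrite -[in RHS](subrK ((pi *+ 2) *+ p.+1) x) (periodicn f_periodic).
Qed.

Lemma natr_mul_zeta {n : nat} : (0 < n)%N -> n%:R * zeta n = pi *+ 2 :> R.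
Proof.
by move=> n_gt0; rewrite /zeta mulr2n; field; rewrite pnatr_eq0 -lt0n.
Qed.

Section Lattice.
Variables (n : nat) (f : R -> R) (t : int).
Hypotheses (n_gt0 : (0 < n)%N) (f_periodic : periodic f (pi *+ 2)).

Lemma periodic_ordS (j : 'I_n) :
  f (((ordS j).+1)%:R * t%:~R * zeta n)
  = f ((j.+1)%:R * t%:~R * zeta n + t%:~R * zeta n).
Proof.
rewrite /=; have [->|j_lt] := eqVneq j.+1 n.
  rewrite modnn mul1r -[in LHS](periodic_intr f_periodic _ t).
  by rewrite -(natr_mul_zeta n_gt0); congr f; ring.
rewrite modn_small; last by rewrite ltn_neqAle j_lt ltn_ord.
by rewrite -addn1 natrD; congr f; ring.
Qed.

Lemma periodic_ord_pred (j : 'I_n) :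
  f (((ord_pred j).+1)%:R * t%:~R * zeta n)
  = f ((j.+1)%:R * t%:~R * zeta n - t%:~R * zeta n).
Proof.
rewrite /=; case: j => [[|i] i_lt] /=.
  rewrite add0n modn_small ?prednK // mul1r subrr.
  rewrite -[in RHS](periodic_intr f_periodic 0 t) add0r -(natr_mul_zeta n_gt0).
  by congr f; ring.
by rewrite modnDr modn_small 1?ltnW // -addn1 natrD; congr f; ring.
Qed.

End Lattice.
End Trigonometry.

Section RotationsAndPhases.
Context {R : realType}.

Lemma expiE (x : R) : expi x = (cos x)%:C + 'i%C * (sin x)%:C.
Proof. by apply/eqP; rewrite eq_complex /=; apply/andP; split; apply/eqP; ring. Qed.

Lemma expiD (x y : R) : expi (x + y) = expi x * expi y.
Proof.
by apply/eqP; rewrite eq_complex /= cosD sinD; apply/andP; split; apply/eqP; ring.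
Qed.

Lemma ord2_cases (i : 'I_2) : i = 0 \/ i = 1.
Proof. by case: i => [[|[|//]]] i_lt; [left|right]; apply: val_inj. Qed.

Lemma rotD (x y : R) : Defs.rot (x + y) = Defs.rot x *m Defs.rot y.
Proof.
apply/matrixP => i l; rewrite [RHS]mxE sum_ord2 !mxE.
by have [->|->] := ord2_cases i; have [->|->] := ord2_cases l;
  rewrite /= ?cosD ?sinD; ring.
Qed.

Lemma mxCM (A B : 'M[R]_2) : mxC (A *m B) = mxC A *m mxC B.
Proof. exact: map_mxM. Qed.

Lemma sum_rot_col0C (x : R) (z : 'cV[R[i]]_2) :
  \sum_(d < 2) (Defs.rot x d 0)%:C * (mxC (Defs.rot x) *m z) d 0 = z 0 0.
Proof.
rewrite sum_ord2 !mxE !sum_ord2 !mxE /= rmorphN.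
rewrite -[RHS]mul1r -(rmorph1 (real_complex R)) -(cos2Dsin2 x).
by rewrite rmorphD !rmorphXn; ring.
Qed.

End RotationsAndPhases.

Section Equilibrium.
Context {R : realType}.
Variables (n : nat) (m : int) (a : R) (V : R -> R).
Local Notation theta j := ((j.+1)%:R * m%:~R * zeta n).

Lemma am_entry (j : 'I_n) (c : 'I_2) :
  am n m a j c = a * Defs.rot (theta j) c 0.
Proof. by rewrite !mxE. Qed.

Lemma row_norm2_am (j : 'I_n) : row_norm2 j (am n m a) = a ^+ 2.
Proof.
by rewrite /row_norm2 sum_ord2 !am_entry !mxE /= !exprMn -mulrDr cos2Dsin2 mulr1.
Qed.

Lemma omegaE :
  omega V n m a = 2 - 2 * cos (m%:~R * zeta n) - derive1 V (a ^+ 2).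
Proof. by rewrite /omega sin_half2; field. Qed.

Lemma hess_act_am (V_derivable : forall x, derivable V x 1)
    (V'_derivable : forall x, derivable (derive1 V) x 1)
    (W : 'M[R[i]]_(n, 2)) j c :
  hess_act n (H V n m a) (am n m a) W j c =
    (2 * a ^+ 2 * derive1n 2 V (a ^+ 2) * Defs.rot (theta j) c 0)%:C
      * \sum_(d < 2) (Defs.rot (theta j) d 0)%:C * W j d
    - (2 * cos (m%:~R * zeta n))%:C * W j c + W (ordS j) c + W (ord_pred j) c.
Proof.
rewrite hess_act_H // row_norm2_am omegaE mulr_sumr.
congr (_ + _ + _ + _).
  apply: eq_bigr => d _; rewrite mulrA -rmorphM !am_entry; congr (_%:C * _).
  by rewrite (_ : derive1n 2 V = derive1 (derive1 V)) //; ring.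
rewrite -[in RHS]mulNr -[in RHS](rmorphN (real_complex R)).
by congr (_%:C * _); ring.
Qed.

End Equilibrium.

Section BlochWave.
Context {R : realType}.
Variables (n : nat) (m : int) (k : nat) (z : 'cV[R[i]]_2).
Hypothesis n_gt0 : (0 < n)%N.
Local Notation theta j := ((j.+1)%:R * m%:~R * zeta n).
Local Notation amp j :=
  ((Num.sqrt (n%:R : R))^-1%:C * expi ((j.+1)%:R * k%:R * zeta n)).

Lemma TkE (j : 'I_n) (c : 'I_2) :
  Tk n m k z j c = amp j * (mxC (Defs.rot (theta j)) *m z) c 0.
Proof. by rewrite mxE. Qed.

Lemma expi_ordS (j : 'I_n) :
  expi (((ordS j).+1)%:R * k%:R * zeta n)
  = expi ((j.+1)%:R * k%:R * zeta n) * expi (k%:R * zeta n) :> R[i].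
Proof.
by rewrite -expiD /expi (periodic_ordS _ _ k n_gt0 (@cosD2pi R))
  (periodic_ordS _ _ k n_gt0 (@sinD2pi R)).
Qed.

Lemma expi_ord_pred (j : 'I_n) :
  expi (((ord_pred j).+1)%:R * k%:R * zeta n)
  = expi ((j.+1)%:R * k%:R * zeta n) * expi (- (k%:R * zeta n)) :> R[i].
Proof.
by rewrite -expiD /expi (periodic_ord_pred _ _ k n_gt0 (@cosD2pi R))
  (periodic_ord_pred _ _ k n_gt0 (@sinD2pi R)).
Qed.

Lemma rot_ordS (j : 'I_n) :
  Defs.rot (theta (ordS j))
  = Defs.rot (theta j) *m Defs.rot (m%:~R * zeta n) :> 'M[R]_2.
Proof.
by rewrite -rotD /Defs.rot (periodic_ordS _ _ m n_gt0 (@cosD2pi R))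
  (periodic_ordS _ _ m n_gt0 (@sinD2pi R)).
Qed.

Lemma rot_ord_pred (j : 'I_n) :
  Defs.rot (theta (ord_pred j))
  = Defs.rot (theta j) *m Defs.rot (- (m%:~R * zeta n)) :> 'M[R]_2.
Proof.
by rewrite -rotD /Defs.rot (periodic_ord_pred _ _ m n_gt0 (@cosD2pi R))
  (periodic_ord_pred _ _ m n_gt0 (@sinD2pi R)).
Qed.

Lemma Tk_ordS (j : 'I_n) c :
  Tk n m k z (ordS j) c = expi (k%:R * zeta n) * (amp j
    * (mxC (Defs.rot (theta j)) *m (mxC (Defs.rot (m%:~R * zeta n)) *m z)) c 0).
Proof. by rewrite TkE expi_ordS rot_ordS mxCM -mulmxA; ring. Qed.

Lemma Tk_ord_pred (j : 'I_n) c :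
  Tk n m k z (ord_pred j) c = expi (- (k%:R * zeta n)) * (amp j
    * (mxC (Defs.rot (theta j)) *m (mxC (Defs.rot (- (m%:~R * zeta n))) *m z))
        c 0).
Proof. by rewrite TkE expi_ord_pred rot_ord_pred mxCM -mulmxA; ring. Qed.

Lemma sum_rot_Tk (j : 'I_n) :
  \sum_(d < 2) (Defs.rot (theta j) d 0)%:C * Tk n m k z j d = amp j * z 0 0.
Proof.
under eq_bigr do rewrite TkE mulrCA.
by rewrite -mulr_sumr sum_rot_col0C.
Qed.

End BlochWave.

Lemma alphaE {R : realType} n m k :
  alpha n m k = 2 * cos (m%:~R * zeta n) * (1 - cos (k%:R * zeta n)) :> R.
Proof. by rewrite /alpha sin_half2; field. Qed.

Lemma Bk_mulmxE {R : realType} (V : R -> R) n m a k (z : 'cV[R[i]]_2) :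
  Bk V n m a k *m z =
    (2 * a ^+ 2 * derive1n 2 V (a ^+ 2))%:C *: (z 0 0 *: delta_mx 0 0)
    - (2 * cos (m%:~R * zeta n))%:C *: z
    + expi (k%:R * zeta n) *: (mxC (Defs.rot (m%:~R * zeta n)) *m z)
    + expi (- (k%:R * zeta n)) *: (mxC (Defs.rot (- (m%:~R * zeta n))) *m z).
Proof.
apply/matrixP => i l; rewrite [l]ord1 !mxE !sum_ord2 !mxE.
rewrite alphaE /beta !expiE !cosN !sinN.
by have [->|->] := ord2_cases i; rewrite /=; ring.
Qed.

Theorem proposition1 (R : realType) (n : nat) (m : int) (a : R) (V : R -> R)
  (k : nat) (z : 'cV[R[i]]_2) :
  (3 <= n)%N -> 0 < a -> smooth V -> (1 <= k <= n)%N ->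
  hess_act n (H V n m a) (am n m a) (Tk n m k z) = Tk n m k (Bk V n m a k *m z).
Proof.
move=> n_ge3 _ V_smooth _.
have n_gt0 : (0 < n)%N by apply: leq_trans n_ge3.
apply/matrixP => j c.
rewrite hess_act_am; [|exact: V_smooth 0%N|exact: V_smooth 1%N].
rewrite sum_rot_Tk Tk_ordS // Tk_ord_pred // !TkE Bk_mulmxE.
by rewrite !mulmxDr mulmxN !scalemxAr !(mxE, sum_ord2) /=; ring.
Qed.
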